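(* There is a constant $C$ such that for every sufficiently large $n$ there exists a $C_4$-free $2$-planar graph on $n$ vertices with at least $2.5n-C$ edges.
   Context: All graphs are finite and simple. A graph is $k$-planar if it admits a drawing in the plane in which every edge is crossed at most $k$ times. A graph is $C_\ell$-free if it contains no cycle of length $\ell$ as a subgraph. (The paper states the edge count as $2.5n-O(1)$.) *)

From Stdlib Require Import Reals List.
From mathcomp Require Import all_boot.
Set Implicit Arguments. Unset Strict Implicit. Unset Printing Implicit Defensive.

Definition simple_graph (n : nat) (e : rel 'I_n) : Prop :=
  (forall u v, e u v = e v u) /\ (forall u, e u u = false).

Definition num_edges (n : nat) (e : rel 'I_n) : nat :=
  #|[set p : 'I_n * 'I_n | (p.1 < p.2)%N && e p.1 p.2]|.

Definition C4_free (n : nat) (e : rel 'I_n) : Prop :=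
  ~ exists a b c d : 'I_n,
      [/\ uniq [:: a; b; c; d], e a b, e b c, e c d & e d a].

Local Open Scope R_scope.

Definition point := (R * R)%type.

Definition continuous_on01 (g : R -> point) : Prop :=
  forall t, 0 <= t <= 1 -> forall eps, 0 < eps -> exists delta, 0 < delta /\
    forall s, 0 <= s <= 1 -> Rabs (s - t) < delta ->
      Rabs (fst (g s) - fst (g t)) < eps /\ Rabs (snd (g s) - snd (g t)) < eps.

Definition is_drawing (n : nat) (e : rel 'I_n) (pos : 'I_n -> point)
    (arc : 'I_n -> 'I_n -> R -> point) : Prop :=
  injective pos /\
  forall u v : 'I_n, (u < v)%N -> e u v ->
    [/\ continuous_on01 (arc u v),
        arc u v 0 = pos u, arc u v 1 = pos v,
        (forall t s, 0 <= t <= 1 -> 0 <= s <= 1 -> arc u v t = arc u v s -> t = s) &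
        (forall w t, 0 < t < 1 -> arc u v t <> pos w)].

(* In the drawing, the edge uv is crossed at most k times: the crossings of
   uv, i.e. pairs (other edge f, point p) where p is a common point of the
   interiors of the arcs of uv and f, form a set of size at most k. *)
Definition crossed_at_most (n : nat) (e : rel 'I_n)
    (arc : 'I_n -> 'I_n -> R -> point) (k : nat) (u v : 'I_n) : Prop :=
  exists L : list ('I_n * 'I_n * point), (length L <= k)%nat /\
    forall x y : 'I_n, (x < y)%N -> e x y -> (x, y) <> (u, v) ->
      forall t s, 0 < t < 1 -> 0 < s < 1 -> arc u v t = arc x y s ->
        In (x, y, arc u v t) L.

Definition k_planar (k n : nat) (e : rel 'I_n) : Prop :=
  exists pos arc, is_drawing e pos arc /\
    forall u v : 'I_n, (u < v)%N -> e u v -> crossed_at_most e arc k u v.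

From Stdlib Require Import ZArith Lia Lra Reals Classical.
From mathcomp Require Import all_boot zify ssrZ.

(* The graph lives on concentric rings of six vertices: vertex 6c + y (0 <= y < 6)
   is drawn at polar coordinates (c + 1, y pi / 3), and every ring c emits the same
   15 edges, listed in [rules], towards rings c, c + 1 and c + 2. An edge is drawn
   as the image of a straight lattice segment under the covering map
   (X, Y) |-> (X + 1) e^(i pi Y / 3) of the punctured plane, so two arcs meet exactly
   where the segments meet after a vertical shift by a multiple of 6. Invariance
   under the ring shift reduces C4-freeness and "at most 2 crossings per edge" to
   finite checks on the pattern, which are done by computation: disjoint segments
   are certified by separating lines, and a crossing with a non-parallel segment is
   a single point. With floor(n/6) rings there are at least 15 (floor(n/6) - 2)
   edges, that is 2.5 n - O(1). *)

Set Implicit Arguments.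
Unset Strict Implicit.
Unset Printing Implicit Defensive.

Local Open Scope Z_scope.

(** * The ring graph *)

Definition rule := (Z * Z * Z)%type.
Definition rrow (r : rule) : Z := r.1.1.
Definition rdx (r : rule) : Z := r.1.2.
Definition rdy (r : rule) : Z := r.2.
Definition rtarget (r : rule) : Z := (rrow r + rdy r) mod 6.
Definition rule_link (r : rule) : Z * Z * Z := (rrow r, rdx r, rtarget r).

(* The rule (y, dx, dy) joins vertex y of every ring c to vertex (y + dy) mod 6
   of ring c + dx, along the lift of the segment from (c, y) to (c + dx, y + dy). *)
Definition rules : seq rule :=
  [:: (0, 1, -2); (0, 1, 1); (0, 2, -1); (1, 1, 0); (1, 1, 1); (1, 2, -1);
      (1, 2, 1); (2, 2, 1); (3, 1, -1); (3, 1, 1); (4, 0, 1); (4, 1, -1);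
      (4, 1, 1); (0, 0, -1); (5, 1, -2)].

Definition row_step (y y' : Z) : Z :=
  let d := (y' - y) mod 6 in if d <=? 2 then d else d - 6.

(* A rule points from the smaller to the larger vertex, its segment ends at a lift
   of its target, and its direction is primitive, so the open segment contains no
   lattice point. *)
Definition rule_ok (r : rule) : bool :=
  [&& (0 <=? rrow r) && (rrow r <=? 5), (0 <=? rdx r) && (rdx r <=? 2),
      (-2 <=? rdy r) && (rdy r <=? 2), (0 <? rdx r) || (rrow r <? rtarget r)
    & (row_step (rrow r) (rtarget r) == rdy r) && (Z.gcd (rdx r) (rdy r) == 1)].

Lemma rule_link_eq r a b c :
  rule_link r = (a, b, c) -> [/\ rrow r = a, rdx r = b & rtarget r = c].
Proof. by case. Qed.

Lemma rules_ok : all rule_ok rules.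
Proof. by vm_compute. Qed.

Lemma uniq_rule_links : uniq (map rule_link rules).
Proof. by vm_compute. Qed.

Lemma size_rules : size rules = 15%N.
Proof. by []. Qed.

Lemma rules_spec r : r \in rules ->
  [/\ 0 <= rrow r <= 5, 0 <= rdx r <= 2, -2 <= rdy r <= 2,
      0 < rdx r \/ rrow r < rtarget r &
      row_step (rrow r) (rtarget r) = rdy r /\ Z.gcd (rdx r) (rdy r) = 1].
Proof.
move/(allP rules_ok)/and5P=> [/andP[? ?] /andP[? ?] /andP[? ?] Hor /andP[/eqP ? /eqP ?]].
by split; [lia | lia | lia | case/orP: Hor; lia | ].
Qed.

Lemma rtarget_range r : 0 <= rtarget r <= 5.
Proof. have := Z.mod_pos_bound (rrow r + rdy r) 6; rewrite /rtarget; lia. Qed.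

(* Adjacency of vertex y of ring c and vertex y' of ring c + o. *)
Definition pattern_adj (o y y' : Z) : bool :=
  ((y, o, y') \in map rule_link rules) || ((y', - o, y) \in map rule_link rules).

Lemma pattern_adj_sym o y y' : pattern_adj (- o) y' y = pattern_adj o y y'.
Proof. by rewrite /pattern_adj Z.opp_involutive orbC. Qed.

Lemma pattern_adj_link o y y' : pattern_adj o y y' ->
  exists2 r, r \in rules & rule_link r = (y, o, y') \/ rule_link r = (y', - o, y).
Proof. by case/orP=> /mapP[r Hr ->]; exists r => //; [left | right]. Qed.

Lemma pattern_adj_offset o y y' : pattern_adj o y y' -> -2 <= o <= 2.
Proof.
by case/pattern_adj_link=> r /rules_spec[_ ? _ _ _] [] /rule_link_eq[_ E _]; lia.
Qed.

Lemma pattern_adj_irr y : pattern_adj 0 y y = false.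
Proof.
apply/negbTE/negP; case/pattern_adj_link=> r /rules_spec[_ _ _ Hor _].
by case=> /rule_link_eq[E1 E2 E3]; lia.
Qed.

Definition col (u : nat) : Z := Z.of_nat (u %/ 6).
Definition row (u : nat) : Z := Z.of_nat (u %% 6).

Lemma col_row (u : nat) : Z.of_nat u = 6 * col u + row u /\ 0 <= row u <= 5 /\ 0 <= col u.
Proof. rewrite /col /row; lia. Qed.

Lemma col_row_inj (u v : nat) : col u = col v -> row u = row v -> u = v.
Proof. have := col_row u; have := col_row v; lia. Qed.

Definition ring_graph n (u v : 'I_n) : bool :=
  [&& (u < 6 * (n %/ 6))%N, (v < 6 * (n %/ 6))%N & pattern_adj (col v - col u) (row u) (row v)].

Lemma ring_graph_simple n : simple_graph (@ring_graph n).
Proof.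
split=> [u v | u]; rewrite /ring_graph.
- rewrite -pattern_adj_sym (_ : - (col v - col u) = col u - col v); last by lia.
  by case: (u < _)%N; case: (v < _)%N.
- by rewrite Z.sub_diag pattern_adj_irr !andbF.
Qed.

Lemma ring_graph_rule n (u v : 'I_n) : ring_graph u v -> (u < v)%N ->
  exists2 r, r \in rules & rule_link r = (row u, col v - col u, row v).
Proof.
case/and3P=> _ _ /pattern_adj_link[r Hr [E | /rule_link_eq[E1 E2 E3]]] Huv; first by exists r.
exfalso; case/rules_spec: Hr => _ Hdx _ Hor _.
by have := col_row u; have := col_row v; lia.
Qed.

Lemma rule_link_determines_edge (u v x y : nat) r :
  rule_link r = (row u, col v - col u, row v) -> rule_link r = (row x, col y - col x, row y) ->
  col x = col u -> x = u /\ y = v.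
Proof. by move=> -> [Er Ed Er'] Ec; split; apply: col_row_inj => //; lia. Qed.

Definition Zrange (lo hi : Z) : seq Z :=
  [seq lo + Z.of_nat i | i <- iota 0 (Z.to_nat (hi - lo + 1))].

Lemma mem_Zrange lo hi z : lo <= z <= hi -> z \in Zrange lo hi.
Proof.
move=> Hz; apply/mapP; exists (Z.to_nat (z - lo)); last by lia.
by rewrite mem_iota; lia.
Qed.

Definition neighbours (p : Z * Z) : seq (Z * Z) :=
  [seq q <- [seq (p.1 + o, y) | o <- Zrange (-2) 2, y <- Zrange 0 5]
   | pattern_adj (q.1 - p.1) p.2 q.2].

Lemma mem_neighbours p q :
  pattern_adj (q.1 - p.1) p.2 q.2 -> 0 <= q.2 <= 5 -> q \in neighbours p.
Proof.
move=> Hadj Hq; rewrite mem_filter Hadj andTb.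
have -> : q = (p.1 + (q.1 - p.1), q.2) by case: q {Hadj Hq} => /= *; congr pair; lia.
apply/allpairsP; exists (q.1 - p.1, q.2); split => //; apply: mem_Zrange => //.
exact: pattern_adj_offset Hadj.
Qed.

(* By invariance under the ring shift it suffices to look at 4-cycles a b c d
   with a in ring 0; such a cycle is degenerate iff c = a or d = b. *)
Definition pattern_C4_free : bool :=
  all (fun y => let a := (0, y) in
    all (fun b => all (fun c => all (fun d => [|| a \notin neighbours d, c == a | d == b])
      (neighbours c)) (neighbours b)) (neighbours a)) (Zrange 0 5).

Lemma pattern_C4_free_ok : pattern_C4_free.
Proof. by vm_compute. Qed.

Definition rel_coord (w x : nat) : Z * Z := (col x - col w, row x).

Lemma ring_graph_neighbours n (w u v : 'I_n) :
  ring_graph u v -> rel_coord w v \in neighbours (rel_coord w u).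
Proof.
case/and3P=> _ _ Hadj; apply: mem_neighbours; last by have := col_row v; rewrite /rel_coord /=; lia.
by rewrite /= (_ : col v - col w - (col u - col w) = col v - col u); last lia.
Qed.

Lemma rel_coord_inj (w x y : nat) : rel_coord w x = rel_coord w y -> x = y.
Proof. by case=> Ec Er; apply: col_row_inj => //; lia. Qed.

Lemma ring_graph_C4_free n : C4_free (@ring_graph n).
Proof.
move=> [a [b [c [d [Hu Hab Hbc Hcd Hda]]]]].
have Ha : rel_coord a a = (0, row a) by rewrite /rel_coord Z.sub_diag.
have := allP pattern_C4_free_ok (row a) (mem_Zrange (proj1 (proj2 (col_row a)))).
rewrite /= -Ha => /allP/(_ _ (ring_graph_neighbours a Hab)).
move=> /allP/(_ _ (ring_graph_neighbours a Hbc)) /allP/(_ _ (ring_graph_neighbours a Hcd)).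
rewrite (ring_graph_neighbours a Hda) /= => /orP[] /eqP/rel_coord_inj/val_inj Eq;
  by move: Hu; rewrite Eq /= !inE !eqxx ?orbT ?andbF.
Qed.

(** * Lattice segments *)

Definition zpoint := (Z * Z)%type.
(* A segment is given by its start point and its direction vector. *)
Definition zsegment := (zpoint * zpoint)%type.

Definition seg_end (S : zsegment) : zpoint := (S.1.1 + S.2.1, S.1.2 + S.2.2).

Definition shift_seg (c k : Z) (S : zsegment) : zsegment :=
  ((S.1.1 + c, S.1.2 + 6 * k), S.2).

Definition affine := (Z * Z * Z)%type.

Definition aff_eval (L : affine) (p : zpoint) : Z := (L.1.1 * p.1 + L.1.2 * p.2 + L.2).

Definition separates (L : affine) (A B : zsegment) : bool :=
  let: (la, lb) := (aff_eval L A.1, aff_eval L (seg_end A)) in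
  let: (lc, ld) := (aff_eval L B.1, aff_eval L (seg_end B)) in
  [&& (la <=? 0), (lb <=? 0), (0 <=? lc), (0 <=? ld)
    & [|| (la <? 0), (lb <? 0), (0 <? lc) | (0 <? ld)]].

Definition aff_opp (L : affine) : affine := (- L.1.1, - L.1.2, - L.2).

Definition line_through (S : zsegment) : affine :=
  (- S.2.2, S.2.1, S.2.2 * S.1.1 - S.2.1 * S.1.2).

(* Zero on the line orthogonal to S through its end (resp. start) point: these
   separate S from collinear segments. *)
Definition beyond_end (S : zsegment) : affine :=
  (S.2.1, S.2.2, - aff_eval (S.2.1, S.2.2, 0) (seg_end S)).
Definition before_start (S : zsegment) : affine :=
  (S.2.1, S.2.2, - aff_eval (S.2.1, S.2.2, 0) S.1).

Definition separated (A B : zsegment) : bool :=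
  has (fun L => separates L A B)
    [:: line_through A; aff_opp (line_through A); line_through B;
        aff_opp (line_through B); beyond_end A; aff_opp (before_start A)].

Definition zcross (A B : zsegment) : Z := (A.2.1 * B.2.2 - A.2.2 * B.2.1).

Definition rule_seg (r : rule) : zsegment := ((0, rrow r), (rdx r, rdy r)).

Definition key_seg (key : Z * Z * rule) : zsegment :=
  shift_seg key.1.1 key.1.2 (rule_seg key.2).

(* The key (c, k, r') stands for the edge of rule r' leaving ring c, with its
   segment shifted up by 6k; by [edge_arcs_meet] these keys account for every
   crossing with an edge leaving ring 0.  The keys (0, k, r) give the edge of
   rule r itself. *)
Definition crossing_keys : seq (Z * Z * rule) :=
  [seq (ck, r') | ck <- [seq (c, k) | c <- Zrange (-1) 1, k <- Zrange (-1) 1], r' <- rules].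

Definition crossing_candidates (r : rule) : seq (Z * Z * rule) :=
  [seq key <- crossing_keys | ((key.1.1 != 0) || (key.2 != r))
                              && ~~ separated (rule_seg r) (key_seg key)].

Definition pattern_2_planar : bool :=
  all (fun r => (size (crossing_candidates r) <= 2)%N
                && all (fun key => zcross (rule_seg r) (key_seg key) != 0) (crossing_candidates r))
    rules.

Lemma pattern_2_planar_ok : pattern_2_planar.
Proof. by vm_compute. Qed.

Lemma mem_crossing_keys c k r' : -1 <= c <= 1 -> -1 <= k <= 1 -> r' \in rules ->
  (c, k, r') \in crossing_keys.
Proof.
move=> Hc Hk Hr'; apply: (allpairs_f (fun ck r' => (ck, r'))) Hr'.
by apply: (allpairs_f (fun c k => (c, k))); apply: mem_Zrange.
Qed.

(** * The drawing *)

Local Open Scope R_scope.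

Lemma cos_sin_add_2kPI a k : cos (a + 2 * (IZR k * PI)) = cos a /\ sin (a + 2 * (IZR k * PI)) = sin a.
Proof.
have S0 : sin (IZR k * PI) = 0 by apply: sin_eq_0_1; exists k.
rewrite cos_plus sin_plus cos_2a_sin sin_2a S0; split; ring.
Qed.

Lemma cos_sin_eq_2kPI a b : cos a = cos b -> sin a = sin b -> exists k, a = b + 2 * (IZR k * PI).
Proof.
move=> Ec Es.
have C1 : cos (2 * ((a - b) / 2)) = 1.
  rewrite (_ : 2 * ((a - b) / 2) = a - b); last by field.
  by rewrite cos_minus Ec Es; have := sin2_cos2 b; rewrite /Rsqr; lra.
have [k Hk] : exists k, (a - b) / 2 = IZR k * PI.
  by apply: sin_eq_0_0; rewrite cos_2a_sin in C1; nra.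
by exists k; lra.
Qed.

Lemma polar_norm r a : r * r = (r * cos a) * (r * cos a) + (r * sin a) * (r * sin a).
Proof. by rewrite -[r * r]Rmult_1_r -(sin2_cos2 a) /Rsqr; ring. Qed.

Definition polar (X Y : R) : point :=
  ((X + 1) * cos (PI * Y / 3), (X + 1) * sin (PI * Y / 3)).

Lemma polar_periodic X Y k : polar X (Y + 6 * IZR k) = polar X Y.
Proof.
rewrite /polar (_ : PI * (Y + 6 * IZR k) / 3 = PI * Y / 3 + 2 * (IZR k * PI)); last by field.
by case: (cos_sin_add_2kPI (PI * Y / 3) k) => -> ->.
Qed.

Lemma polar_inj X Y X' Y' : 0 <= X -> 0 <= X' -> polar X Y = polar X' Y' ->
  X = X' /\ exists k, Y = Y' + 6 * IZR k.
Proof.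
rewrite /polar => HX HX' [E1 E2].
set a := PI * Y / 3 in E1 E2; set b := PI * Y' / 3 in E1 E2.
have EX : X = X'.
  have Esq : (X + 1) * (X + 1) = (X' + 1) * (X' + 1).
    by rewrite (polar_norm (X + 1) a) (polar_norm (X' + 1) b) E1 E2.
  nra.
subst X'; split => //.
have [k Hk] : exists k, a = b + 2 * (IZR k * PI).
  by apply: cos_sin_eq_2kPI; apply: (Rmult_eq_reg_l (X + 1)); lra.
exists k; have := PI_RGT_0; rewrite /a /b in Hk; nra.
Qed.

Definition seg_pt (S : zsegment) (t : R) : point :=
  (IZR S.1.1 + t * IZR S.2.1, IZR S.1.2 + t * IZR S.2.2).

Lemma seg_pt_shift c k S t :
  seg_pt (shift_seg c k S) t = (fst (seg_pt S t) + IZR c, snd (seg_pt S t) + 6 * IZR k).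
Proof. by rewrite /seg_pt /shift_seg !plus_IZR mult_IZR /=; congr pair; ring. Qed.

Lemma aff_eval_seg_pt L S t :
  IZR L.1.1 * fst (seg_pt S t) + IZR L.1.2 * snd (seg_pt S t) + IZR L.2
  = (1 - t) * IZR (aff_eval L S.1) + t * IZR (aff_eval L (seg_end S)).
Proof. by rewrite /aff_eval /seg_pt /= !plus_IZR !mult_IZR !plus_IZR; ring. Qed.

Lemma convex_sign_separation la lb lc ld t s :
  la <= 0 -> lb <= 0 -> 0 <= lc -> 0 <= ld -> la < 0 \/ lb < 0 \/ 0 < lc \/ 0 < ld ->
  0 < t < 1 -> 0 < s < 1 -> (1 - t) * la + t * lb <> (1 - s) * lc + s * ld.
Proof. move=> *; nra. Qed.

Lemma separated_disjoint A B t s :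
  separated A B -> 0 < t < 1 -> 0 < s < 1 -> seg_pt A t <> seg_pt B s.
Proof.
case/hasP=> L _; rewrite /separates.
case/and5P=> /Z.leb_le/IZR_le Ha /Z.leb_le/IZR_le Hb /Z.leb_le/IZR_le Hc /Z.leb_le/IZR_le Hd.
move=> Hstrict Ht Hs E; apply: (convex_sign_separation Ha Hb Hc Hd _ Ht Hs).
  by case/or4P: Hstrict => /Z.ltb_lt/IZR_lt; tauto.
by rewrite -!aff_eval_seg_pt E.
Qed.

Lemma seg_meet_unique A B t s t' s' : zcross A B <> 0%Z ->
  seg_pt A t = seg_pt B s -> seg_pt A t' = seg_pt B s' -> t = t'.
Proof.
rewrite /zcross /seg_pt => /not_0_IZR; rewrite minus_IZR !mult_IZR => Hx [E1 E2] [E3 E4].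
have X1 : (t - t') * IZR A.2.1 = (s - s') * IZR B.2.1 by lra.
have X2 : (t - t') * IZR A.2.2 = (s - s') * IZR B.2.2 by lra.
have : (t - t') * (IZR A.2.1 * IZR B.2.2 - IZR A.2.2 * IZR B.2.1) = 0.
  have -> : (t - t') * (IZR A.2.1 * IZR B.2.2 - IZR A.2.2 * IZR B.2.1)
    = ((t - t') * IZR A.2.1) * IZR B.2.2 - ((t - t') * IZR A.2.2) * IZR B.2.1 by ring.
  by rewrite X1 X2; ring.
by case/Rmult_integral => //; lra.
Qed.

Lemma gcd1_combination (a b : Z) (x : R) : Z.gcd a b = 1%Z ->
  exists p q : Z, x = IZR p * (x * IZR a) + IZR q * (x * IZR b).
Proof.
case/Z.gcd_bezout=> p [q Hpq]; exists p, q.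
have : IZR (p * a + q * b) = 1 by rewrite Hpq.
by rewrite plus_IZR !mult_IZR => H; rewrite -[LHS]Rmult_1_r -H; ring.
Qed.

Lemma continuous_on01_components (h : R -> point) :
  continuity (fun t => fst (h t)) -> continuity (fun t => snd (h t)) -> continuous_on01 h.
Proof.
have near : forall f : R -> R, continuity f -> forall t eps, 0 < eps ->
    exists2 d, 0 < d & forall s, Rabs (s - t) < d -> Rabs (f s - f t) < eps.
  move=> f Hf t eps He; have [d [Hd Hd']] := Hf t eps He.
  exists d => // s Hs; case: (Req_dec s t) => [-> | Hne]; first by rewrite Rminus_diag Rabs_R0.
  by apply: Hd'; split => //; split => //; apply: not_eq_sym.
move=> H1 H2 t _ eps He.
have [d1 Hd1 C1] := near _ H1 t eps He; have [d2 Hd2 C2] := near _ H2 t eps He.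
exists (Rmin d1 d2); split; first exact: Rmin_pos.
move=> s _ Hs; have := Rmin_l d1 d2; have := Rmin_r d1 d2.
by split; [apply: C1 | apply: C2]; lra.
Qed.

Lemma IZR_col_ge0 (u : nat) : 0 <= IZR (col u).
Proof. by apply: IZR_le; have := col_row u; lia. Qed.

Lemma rule_bounds r : r \in rules ->
  [/\ 0 <= IZR (rrow r) <= 5, 0 <= IZR (rdx r) <= 2 & -2 <= IZR (rdy r) <= 2].
Proof. by case/rules_spec=> ? ? ? _ _; split; split; apply: IZR_le; lia. Qed.

Definition edge_seg (u v : nat) : zsegment :=
  ((col u, row u), (col v - col u, row_step (row u) (row v)))%Z.

Definition vertex_pt (u : nat) : point := polar (IZR (col u)) (IZR (row u)).

Definition edge_arc (u v : nat) (t : R) : point :=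
  polar (fst (seg_pt (edge_seg u v) t)) (snd (seg_pt (edge_seg u v) t)).

Lemma vertex_pt_inj : injective vertex_pt.
Proof.
move=> u w; rewrite /vertex_pt; have := col_row u; have := col_row w => Dw Du.
case/polar_inj; [exact: IZR_col_ge0 | exact: IZR_col_ge0 | move=> /eq_IZR Ec [k Ek]].
have Er : (row u = row w + 6 * k)%Z by apply: eq_IZR; rewrite plus_IZR mult_IZR.
apply: col_row_inj => //; lia.
Qed.

Lemma edge_arc_0 u v : edge_arc u v 0 = vertex_pt u.
Proof. by rewrite /edge_arc /seg_pt /= !Rmult_0_l !Rplus_0_r. Qed.

Lemma edge_arc_continuous u v : continuous_on01 (edge_arc u v).
Proof.
by apply: continuous_on01_components; apply: derivable_continuous; rewrite /edge_arc /polar /=; reg.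
Qed.

Section RuleEdge.
Variables (u v : nat) (r : rule).
Hypotheses (Hr : r \in rules) (Huv : rule_link r = (row u, col v - col u, row v)%Z).

Lemma edge_seg_rule : edge_seg u v = shift_seg (col u) 0 (rule_seg r).
Proof.
have [Erow Edx Etgt] := rule_link_eq Huv; case/rules_spec: Hr => _ _ _ _ [Estep _].
rewrite /edge_seg /shift_seg /rule_seg /= -Erow -Etgt Estep -Edx.
by congr (_, _, _); lia.
Qed.

Lemma edge_arc_rule t :
  edge_arc u v t = polar (IZR (col u) + t * IZR (rdx r)) (IZR (rrow r) + t * IZR (rdy r)).
Proof. by rewrite /edge_arc edge_seg_rule seg_pt_shift /=; congr polar; lra. Qed.

Lemma edge_arc_1 : edge_arc u v 1 = vertex_pt v.
Proof.
rewrite edge_arc_rule /vertex_pt !Rmult_1_l.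
have [_ Edx Etgt] := rule_link_eq Huv.
have Ey : (rrow r + rdy r = row v + 6 * ((rrow r + rdy r) / 6))%Z.
  by rewrite -Etgt /rtarget {1}(Z_div_mod_eq_full (rrow r + rdy r) 6); lia.
have -> : IZR (col u) + IZR (rdx r) = IZR (col v) by rewrite -plus_IZR; f_equal; lia.
by rewrite -plus_IZR Ey plus_IZR mult_IZR polar_periodic.
Qed.

Lemma edge_arc_inj t s :
  0 <= t <= 1 -> 0 <= s <= 1 -> edge_arc u v t = edge_arc u v s -> t = s.
Proof.
move=> Ht Hs; rewrite !edge_arc_rule; case/rules_spec: (Hr) => _ _ _ _ [_ Hgcd].
have Cu := IZR_col_ge0 u; case: (rule_bounds Hr) => _ [Dx0 Dx2] [Dy0 Dy2].
case/polar_inj; [nra | nra | move=> EX [k Ek]].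
have Hk : k = 0%Z.
  have [/lt_IZR ? /lt_IZR ?] : -1 < IZR k < 1 by nra.
  lia.
have E1 : (t - s) * IZR (rdx r) = 0 by lra.
have E2 : (t - s) * IZR (rdy r) = 0 by rewrite Hk in Ek; lra.
apply: Rminus_diag_uniq; have [p [q ->]] := gcd1_combination (t - s) Hgcd.
by rewrite E1 E2; ring.
Qed.

Lemma edge_arc_avoids_vertices (w : nat) t : 0 < t < 1 -> edge_arc u v t <> vertex_pt w.
Proof.
move=> Ht; rewrite edge_arc_rule /vertex_pt; case/rules_spec: (Hr) => _ _ _ _ [_ Hgcd].
have Cu := IZR_col_ge0 u; case: (rule_bounds Hr) => _ [Dx0 _] _.
case/polar_inj; [nra | exact: IZR_col_ge0 | move=> EX [k Ek]].
have [p [q Et]] := gcd1_combination t Hgcd.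
have X1 : t * IZR (rdx r) = IZR (col w - col u) by rewrite minus_IZR; lra.
have X2 : t * IZR (rdy r) = IZR (row w + 6 * k - rrow r).
  by rewrite minus_IZR plus_IZR mult_IZR; lra.
rewrite X1 X2 -!mult_IZR -plus_IZR in Et.
by case: Ht; rewrite Et => /lt_IZR ? /lt_IZR ?; lia.
Qed.
End RuleEdge.

Lemma edge_arcs_meet (u v x y : nat) (r r' : rule) t s :
  r \in rules -> rule_link r = (row u, col v - col u, row v)%Z ->
  r' \in rules -> rule_link r' = (row x, col y - col x, row y)%Z ->
  0 < t < 1 -> 0 < s < 1 -> edge_arc u v t = edge_arc x y s ->
  exists k, [/\ (-1 <= col x - col u <= 1)%Z, (-1 <= k <= 1)%Z &
    seg_pt (rule_seg r) t = seg_pt (shift_seg (col x - col u) k (rule_seg r')) s].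
Proof.
move=> Hr Huv Hr' Hxy Ht Hs; rewrite (edge_arc_rule Hr Huv) (edge_arc_rule Hr' Hxy).
have Cu := IZR_col_ge0 u; have Cx := IZR_col_ge0 x.
case: (rule_bounds Hr) => [[Y0 Y5] [Dx0 Dx2] [Dy0 Dy2]].
case: (rule_bounds Hr') => [[Y0' Y5'] [Dx0' Dx2'] [Dy0' Dy2']].
case/polar_inj; [nra | nra | move=> EX [k Ek]].
have Ec : IZR (col x - col u) = t * IZR (rdx r) - s * IZR (rdx r') by rewrite minus_IZR; lra.
have [/lt_IZR ? /lt_IZR ?] : -2 < IZR (col x - col u) < 2 by rewrite Ec; nra.
have [/lt_IZR ? /lt_IZR ?] : -2 < IZR k < 2 by nra.
exists k; split; [lia | lia | ].
by rewrite seg_pt_shift /seg_pt /= minus_IZR; congr pair; lra.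
Qed.

(** * Crossings *)

Lemma cover_by_keys (A : Type) (K : eqType) (keys : seq K) (S : A -> Prop) (R : A -> K -> Prop) :
  (forall z, S z -> exists2 k, k \in keys & R z k) ->
  (forall k z z', k \in keys -> R z k -> R z' k -> z = z') ->
  exists L : list A, (length L <= size keys)%N /\ forall z, S z -> List.In z L.
Proof.
elim: keys S => [|k keys IH] S Hcov Huniq; first by exists nil; split => // z /Hcov[].
have [L [HL HS]] : exists L : list A,
    (length L <= size keys)%N /\ forall z, S z /\ ~ R z k -> List.In z L.
  apply: IH => [z [Sz nRz] | k' z z' Hk']; last by apply: Huniq; rewrite inE Hk' orbT.
  case: (Hcov z Sz) => k'; rewrite inE => /orP[/eqP -> // | Hk' Rz]; by exists k'.
case: (classic (exists2 z0, S z0 & R z0 k)) => [[z0 Sz0 Rz0] | Hno].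
- exists (z0 :: L); split => // z Sz.
  case: (classic (R z k)) => [Rz | nRz]; [left | right; exact: HS].
  by apply: (Huniq k) => //; rewrite inE eqxx.
- exists L; split; first exact: leqW.
  by move=> z Sz; apply: HS; split => // Rz; apply: Hno; exists z.
Qed.

Section EdgeCrossings.
Variables (n : nat) (u v : 'I_n) (r : rule).
Hypotheses (Hr : r \in rules) (Huv : rule_link r = (row u, col v - col u, row v)%Z).

Let crossing (z : 'I_n * 'I_n * point) : Prop :=
  exists x y t s, z = (x, y, edge_arc u v t) /\
    [/\ (x < y)%N, ring_graph x y & (x, y) <> (u, v)]
    /\ [/\ 0 < t < 1, 0 < s < 1 & edge_arc u v t = edge_arc x y s].

Let crossing_via (z : 'I_n * 'I_n * point) (key : Z * Z * rule) : Prop :=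
  exists x y t s, z = (x, y, edge_arc u v t) /\
    [/\ rel_coord u x = (key.1.1, rrow key.2),
        rel_coord u y = (key.1.1 + rdx key.2, rtarget key.2)%Z,
        0 < t < 1, 0 < s < 1 & seg_pt (rule_seg r) t = seg_pt (key_seg key) s].

Lemma crossing_has_candidate z :
  crossing z -> exists2 key, key \in crossing_candidates r & crossing_via z key.
Proof.
case=> x [y [t [s [-> [[Hxy Exy Hne] [Ht Hs E]]]]]].
have [r' Hr' Hlink] := ring_graph_rule Exy Hxy.
have [k [Hc Hk Emeet]] := edge_arcs_meet Hr Huv Hr' Hlink Ht Hs E.
have [Erow Edx Etgt] := rule_link_eq Hlink.
exists (col x - col u, k, r')%Z; last first.
  exists x, y, t, s; split => //.
  by split => //; rewrite /rel_coord /= ?Erow ?Etgt; congr pair; lia.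
rewrite mem_filter mem_crossing_keys // andbT; apply/andP; split.
  rewrite /= -negb_and; apply/negP => /andP[/eqP Ec /eqP Er']; subst r'; apply: Hne.
  by have [/val_inj -> /val_inj ->] := rule_link_determines_edge Huv Hlink (Zminus_eq _ _ Ec).
by apply/negP => /separated_disjoint/(_ Ht Hs); apply.
Qed.

Lemma crossing_candidate_unique key z z' : key \in crossing_candidates r ->
  crossing_via z key -> crossing_via z' key -> z = z'.
Proof.
move=> Hkey [x [y [t [s [-> [Ex Ey Ht Hs E]]]]]] [x' [y' [t' [s' [-> [Ex' Ey' Ht' Hs' E']]]]]].
have Hcross : zcross (rule_seg r) (key_seg key) <> 0%Z.
  by apply/eqP; move/allP: pattern_2_planar_ok => /(_ r Hr)/andP[_ /allP/(_ key Hkey)].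
have -> : x' = x by apply: val_inj; apply: (@rel_coord_inj u); rewrite Ex Ex'.
have -> : y' = y by apply: val_inj; apply: (@rel_coord_inj u); rewrite Ey Ey'.
by rewrite (seg_meet_unique Hcross E' E).
Qed.

Lemma ring_edge_crossed_at_most_2 :
  crossed_at_most (@ring_graph n) (fun x y : 'I_n => edge_arc x y) 2 u v.
Proof.
have [L [HL Hcov]] := cover_by_keys crossing_has_candidate crossing_candidate_unique.
exists L; split.
  by apply: leq_trans HL _; move/allP: pattern_2_planar_ok => /(_ r Hr)/andP[].
by move=> x y Hxy Exy Hne t s Ht Hs E; apply: Hcov; exists x, y, t, s.
Qed.
End EdgeCrossings.

Lemma ring_graph_2_planar n : k_planar 2 (@ring_graph n).
Proof.
exists (fun u : 'I_n => vertex_pt u), (fun u v : 'I_n => edge_arc u v); split.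
  split=> [u w /vertex_pt_inj/val_inj // | u v Huv Euv].
  have [r Hr E] := ring_graph_rule Euv Huv.
  split; [exact: edge_arc_continuous | exact: edge_arc_0 | exact: edge_arc_1 Hr E
         | exact: edge_arc_inj Hr E | exact: edge_arc_avoids_vertices Hr E].
move=> u v Huv Euv; have [r Hr E] := ring_graph_rule Euv Huv.
exact: ring_edge_crossed_at_most_2 Hr E.
Qed.

(** * Counting edges *)

Local Open Scope nat_scope.

Definition rule_edge (c : nat) (r : rule) : nat * nat :=
  (6 * c + Z.to_nat (rrow r), 6 * (c + Z.to_nat (rdx r)) + Z.to_nat (rtarget r)).

Arguments rule_edge : simpl never.

Lemma rule_edge_spec m c r : c < m - 2 -> r \in rules ->
  let: (x, y) := rule_edge c r in
  [/\ x < y, y < 6 * m, col x = Z.of_nat c & rule_link r = (row x, col y - col x, row y)%Z].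
Proof.
move=> Hc /rules_spec[Hy Hdx _ Hor _]; have := rtarget_range r.
rewrite /rule_edge /rule_link /row /col /=; split; [lia | lia | lia | congr (_, _, _); lia].
Qed.

Section EdgeCount.
Variable n : nat.
Let m := n.+1 %/ 6.
Let r0 : rule := (0, 0, 0)%Z.
Let rl (j : 'I_(size rules)) : rule := nth r0 rules j.

Let edge_of (p : 'I_(m - 2) * 'I_(size rules)) : 'I_n.+1 * 'I_n.+1 :=
  (inord (rule_edge p.1 (rl p.2)).1, inord (rule_edge p.1 (rl p.2)).2).

Let edge_of_spec (p : 'I_(m - 2) * 'I_(size rules)) :=
  rule_edge_spec (ltn_ord p.1) (mem_nth r0 (ltn_ord p.2) : rl p.2 \in rules).

Lemma edge_of_val p :
  (val (edge_of p).1, val (edge_of p).2) = rule_edge p.1 (rl p.2).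
Proof.
have Hm : 6 * m <= n.+1 by rewrite /m; lia.
move: (edge_of_spec p); rewrite /edge_of; case: (rule_edge _ _) => x y /= [Hxy Hy _ _].
have Hyn := leq_trans Hy Hm.
by rewrite !inordK // (ltn_trans Hxy Hyn).
Qed.

Lemma edge_of_inj : injective edge_of.
Proof.
move=> p q /(congr1 (fun e => (val e.1, val e.2))); rewrite !edge_of_val => Epq.
move: (edge_of_spec p) (edge_of_spec q); rewrite Epq; case: (rule_edge _ _) => x y.
case=> _ _ Cp Lp [_ _ Cq Lq].
have E1 : p.1 = q.1 by apply: val_inj; apply: Nat2Z.inj; rewrite -Cp -Cq.
have E2 : p.2 = q.2.
  apply: val_inj; apply/eqP.
  rewrite -(nth_uniq (rule_link r0) _ _ uniq_rule_links) ?size_map ?ltn_ord //.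
  by rewrite !(nth_map r0) ?ltn_ord //; apply/eqP; rewrite [LHS]Lp Lq.
by move: E1 E2; case: p {Epq Cp Lp} => p1 p2; case: q {Cq Lq} => q1 q2 /= -> ->.
Qed.

Lemma edge_of_edge p : ((edge_of p).1 < (edge_of p).2) && ring_graph (edge_of p).1 (edge_of p).2.
Proof.
move: (edge_of_val p) (edge_of_spec p); rewrite /ring_graph -/m.
case: (rule_edge _ _) => x y [-> ->] [Hxy Hy _ Hlink].
rewrite Hxy Hy (ltn_trans Hxy Hy) /pattern_adj -Hlink.
by rewrite (map_f rule_link (mem_nth r0 (ltn_ord p.2))).
Qed.

Lemma ring_graph_num_edges : 15 * (m - 2) <= num_edges (@ring_graph n.+1).
Proof.
apply: leq_trans (subset_leq_card (_ : edge_of @: [set: _] \subset _)).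
  rewrite card_imset; last exact: edge_of_inj.
  by rewrite cardsT card_prod !card_ord size_rules mulnC.
by apply/subsetP => _ /imsetP[p _ ->]; rewrite inE edge_of_edge.
Qed.
End EdgeCount.

Theorem theorem14 :
  exists C N : nat, forall n : nat, (N <= n)%N ->
    exists e : rel 'I_n,
      [/\ simple_graph e, C4_free e, k_planar 2 e &
          (5 * n <= 2 * num_edges e + 2 * C)%N].
Proof.
exists 43, 0 => n _; exists (@ring_graph n); split.
- exact: ring_graph_simple.
- exact: ring_graph_C4_free.
- exact: ring_graph_2_planar.
- by case: n => [// | n]; have := ring_graph_num_edges n; lia.
Qed.
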